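(* Let $H$ be a complex Hilbert space, let $R \in \mathcal{L}(H)$ be an isometry (i.e. $\|Rx\| = \|x\|$ for all $x\in H$), and let $T \in \mathcal{L}(H)$ satisfy the property $\mathcal{AN}^*$. Then $TR$ and $RT$ satisfy the property $\mathcal{AN}^*$.
   Context: $\mathcal{L}(H)$ is the space of bounded linear operators on $H$. For a closed subspace $M \neq \{0\}$ of $H$ and $T \in \mathcal{L}(H)$, write $[T|_M] := \inf\{\|Tx\| : x \in M, \|x\|=1\}$; $T|_M$ satisfies the property $\mathcal{N}^*$ if there exists $x_0 \in M$ with $\|x_0\| = 1$ and $\|Tx_0\| = [T|_M]$. $T$ satisfies the property $\mathcal{AN}^*$ if for every closed subspace $M \neq \{0\}$ of $H$, $T|_M$ satisfies $\mathcal{N}^*$. *)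

From mathcomp Require Import all_boot all_order all_algebra.
From mathcomp Require Import complex.
From mathcomp Require Import classical_sets reals.
Set Implicit Arguments. Unset Strict Implicit. Unset Printing Implicit Defensive.
Import Order.TTheory GRing.Theory Num.Theory.
Local Open Scope ring_scope.
Local Open Scope classical_set_scope.

Section Hilbert.
Variables (R : realType) (V : lmodType R[i]) (ip : V -> V -> R[i]).

Definition hnorm (x : V) : R := Num.sqrt (complex.Re (ip x x)).

Definition is_hilbert : Prop :=
  [/\ (forall (a : R[i]) (x y z : V), ip (a *: x + y) z = a * ip x z + ip y z),
      (forall x y : V, ip y x = (ip x y)^*%C),
      (forall x : V, 0 <= ip x x),
      (forall x : V, ip x x = 0 -> x = 0) &
      (forall u : nat -> V,
         (forall e : R, 0 < e -> exists N : nat, forall m n : nat,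
            (N <= m)%N -> (N <= n)%N -> hnorm (u m - u n) < e) ->
         exists l : V, forall e : R, 0 < e -> exists N : nat, forall n : nat,
            (N <= n)%N -> hnorm (u n - l) < e)].

Definition bounded_op (T : V -> V) : Prop :=
  (forall (a : R[i]) (x y : V), T (a *: x + y) = a *: T x + T y) /\
  (exists C : R, forall x : V, hnorm (T x) <= C * hnorm x).

Definition is_isometry (T : V -> V) : Prop := forall x : V, hnorm (T x) = hnorm x.

Definition closed_subspace (M : set V) : Prop :=
  [/\ M 0,
      (forall (a : R[i]) (x y : V), M x -> M y -> M (a *: x + y)) &
      (forall (u : nat -> V) (l : V), (forall n, M (u n)) ->
         (forall e : R, 0 < e -> exists N : nat, forall n : nat,
            (N <= n)%N -> hnorm (u n - l) < e) -> M l)].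

Definition restr_inf (T : V -> V) (M : set V) : R :=
  inf [set hnorm (T x) | x in [set x | M x /\ hnorm x = 1]].

Definition prop_Nstar (T : V -> V) (M : set V) : Prop :=
  exists x0 : V, [/\ M x0, hnorm x0 = 1 & hnorm (T x0) = restr_inf T M].

Definition prop_ANstar (T : V -> V) : Prop :=
  forall M : set V, closed_subspace M -> M <> [set 0] -> prop_Nstar T M.

End Hilbert.

(** An isometry R maps a closed subspace M isometrically onto the closed
    subspace R M (closed because H is complete), and it maps the unit sphere
    of M onto that of R M.  Hence the values [||T R x||] over the unit sphere
    of M are exactly the values [||T y||] over the unit sphere of R M, so a
    minimiser of T on R M pulls back to one of TR on M.  For RT nothing
    changes at all: [||R T x|| = ||T x||]. *)
From mathcomp Require Import all_boot all_order all_algebra complex classical_sets reals boolp.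
From mathcomp Require Import ring lra.
Set Implicit Arguments. Unset Strict Implicit. Unset Printing Implicit Defensive.
Import Order.TTheory GRing.Theory Num.Theory.
Local Open Scope ring_scope.
Local Open Scope classical_set_scope.

Section InnerProductNorm.
Variables (R : realType) (V : lmodType R[i]) (ip : V -> V -> R[i]).
Hypothesis Hhil : is_hilbert ip.

Lemma ipDl x y z : ip (x + y) z = ip x z + ip y z.
Proof. by case: Hhil => ipl _ _ _ _; rewrite -[x]scale1r ipl mul1r scale1r. Qed.

Lemma ip0l z : ip 0 z = 0.
Proof. by apply: (addrI (ip 0 z)); rewrite -ipDl !addr0. Qed.

Lemma ipNl x z : ip (- x) z = - ip x z.
Proof.
case: Hhil => ipl _ _ _ _.
by have := ipl (-1) x 0 z; rewrite !addr0 ip0l addr0 scaleN1r mulN1r.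
Qed.

Lemma ipDr x y z : ip z (x + y) = ip z x + ip z y.
Proof. by case: Hhil => _ ipC _ _ _; rewrite ipC ipDl rmorphD (ipC x z) (ipC y z). Qed.

Lemma ipNr x z : ip z (- x) = - ip z x.
Proof. by case: Hhil => _ ipC _ _ _; rewrite ipC ipNl rmorphN (ipC x z). Qed.

Lemma parallelogram x y :
  ip (x + y) (x + y) + ip (x - y) (x - y) = ip x x *+ 2 + ip y y *+ 2.
Proof. rewrite !ipDl !ipDr !ipNl !ipNr opprK; ring. Qed.

Lemma Re_ip_ge0 x : 0 <= complex.Re (ip x x).
Proof. by case: Hhil => _ _ ip_ge0 _ _; move: (ip_ge0 x); rewrite lecE => /andP[]. Qed.

Lemma hnorm_ge0 x : 0 <= hnorm ip x.
Proof. exact: sqrtr_ge0. Qed.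

Lemma hnorm_sqr x : hnorm ip x ^+ 2 = complex.Re (ip x x).
Proof. by rewrite sqr_sqrtr // Re_ip_ge0. Qed.

Lemma hnorm0 : hnorm ip 0 = 0.
Proof. by rewrite /hnorm ip0l sqrtr0. Qed.

Lemma hnormN x : hnorm ip (- x) = hnorm ip x.
Proof. by rewrite /hnorm ipNl ipNr opprK. Qed.

Lemma hnorm_eq0 x : hnorm ip x = 0 -> x = 0.
Proof.
move=> /eqP; rewrite sqrtr_eq0 => Re_le0.
have Re0 : complex.Re (ip x x) = 0 by apply/le_anti; rewrite Re_le0 Re_ip_ge0.
case: Hhil => _ _ ip_ge0 ip_eq0 _; apply: ip_eq0.
by move: (ip_ge0 x) Re0; rewrite lecE; case: (ip x x) => a b /= /andP[/eqP -> _] ->.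
Qed.

Lemma hnormD_sqr_le x y : hnorm ip (x + y) ^+ 2 <= 2 * hnorm ip x ^+ 2 + 2 * hnorm ip y ^+ 2.
Proof.
have ReD (a b : R[i]) : complex.Re (a + b) = complex.Re a + complex.Re b.
  by case: a; case: b.
have := congr1 (@complex.Re R) (parallelogram x y).
rewrite !mulr2n !ReD -!hnorm_sqr.
have := sqr_ge0 (hnorm ip (x - y)); lra.
Qed.

Lemma hnormD_lt x y e :
  hnorm ip x < e / 2 -> hnorm ip y < e / 2 -> hnorm ip (x + y) < e.
Proof.
move=> x_lt y_lt; have := hnormD_sqr_le x y.
have := hnorm_ge0 x; have := hnorm_ge0 y; have := hnorm_ge0 (x + y).
nra.
Qed.

Lemma hnormBC x y : hnorm ip (x - y) = hnorm ip (y - x).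
Proof. by rewrite -hnormN opprB. Qed.

Lemma hnorm_lt_eq0 x : (forall e, 0 < e -> hnorm ip x < e) -> x = 0.
Proof.
move=> small; apply: hnorm_eq0; apply/le_anti; rewrite hnorm_ge0 andbT.
by rewrite leNgt; apply/negP => /small; rewrite ltxx.
Qed.

Definition hcvg (u : nat -> V) (l : V) : Prop :=
  forall e, 0 < e -> exists N, forall n, (N <= n)%N -> hnorm ip (u n - l) < e.

Definition hcauchy (u : nat -> V) : Prop :=
  forall e, 0 < e -> exists N, forall m n, (N <= m)%N -> (N <= n)%N ->
    hnorm ip (u m - u n) < e.

Lemma hcvg_cauchy u l : hcvg u l -> hcauchy u.
Proof.
move=> ul e e_gt0; have [N ulN] := ul (e / 2) ltac:(lra).
exists N => m n Nm Nn.
rewrite -(subrKA l); apply: hnormD_lt; first exact: ulN.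
by rewrite hnormBC; apply: ulN.
Qed.

Lemma hcvg_unique u l l' : hcvg u l -> hcvg u l' -> l = l'.
Proof.
move=> ul ul'; apply/subr0_eq/hnorm_lt_eq0 => e e_gt0.
have [N ulN] := ul (e / 2) ltac:(lra).
have [N' ulN'] := ul' (e / 2) ltac:(lra).
rewrite -(subrKA (u (maxn N N'))); apply: hnormD_lt.
- by rewrite hnormBC; apply: ulN; rewrite leq_maxl.
- by apply: ulN'; rewrite leq_maxr.
Qed.

Lemma hcauchy_cvg u : hcauchy u -> exists l, hcvg u l.
Proof. by case: Hhil => _ _ _ _ complete; apply: complete. Qed.

End InnerProductNorm.

Section LinearIsometry.
Variables (R : realType) (V : lmodType R[i]) (ip : V -> V -> R[i]).
Hypothesis Hhil : is_hilbert ip.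
Variable S : V -> V.
Hypothesis S_linear : forall (a : R[i]) (x y : V), S (a *: x + y) = a *: S x + S y.
Hypothesis S_isometry : is_isometry ip S.

Lemma isometryB x y : S (x - y) = S x - S y.
Proof. by rewrite addrC -scaleN1r S_linear scaleN1r addrC. Qed.

Lemma isometry0 : S 0 = 0.
Proof. by rewrite -(subrr (0 : V)) isometryB !subrr. Qed.

Lemma isometry_eq0 x : S x = 0 -> x = 0.
Proof.
move=> Sx0; apply: (hnorm_eq0 Hhil).
by rewrite -S_isometry Sx0 (hnorm0 Hhil).
Qed.

Lemma hcvg_isometry u l : hcvg ip u l -> hcvg ip (S \o u) (S l).
Proof. by move=> ul e /ul[N ulN]; exists N => n /ulN; rewrite /= -isometryB S_isometry. Qed.

Lemma hcauchy_isometry u : hcauchy ip (S \o u) -> hcauchy ip u.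
Proof.
move=> Su e /Su[N SuN]; exists N => m n Nm Nn.
by rewrite -S_isometry isometryB; apply: SuN.
Qed.

Lemma closed_subspace_isometry M :
  closed_subspace ip M -> closed_subspace ip (S @` M).
Proof.
case=> M0 M_lin M_closed; split.
- by exists 0; [exact: M0 | exact: isometry0].
- move=> a _ _ [x Mx <-] [y My <-].
  by exists (a *: x + y); [exact: M_lin | exact: S_linear].
move=> v l SMv vl.
have /choice[u uP] : forall n, exists x, M x /\ S x = v n.
  by move=> n; have [x Mx Sxv] := SMv n; exists x.
have Su : S \o u = v by apply: funext => n; apply: (uP n).2.
have [l' ul'] : exists l', hcvg ip u l'.
  apply: (hcauchy_cvg Hhil); apply: hcauchy_isometry.
  by rewrite Su; apply: hcvg_cauchy Hhil _ _ vl.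
exists l'; first by apply: (M_closed u) => [n|]; [apply: (uP n).1 | apply: ul'].
by apply: (hcvg_unique Hhil (u := v)); rewrite // -Su; apply: hcvg_isometry.
Qed.

Lemma isometry_image_neq0 M : M <> [set 0] -> S @` M <> [set 0].
Proof.
move=> M_neq0 SM0; apply: M_neq0; apply/seteqP; split => [x Mx | _ ->].
  have : (S @` M) (S x) by exists x.
  by rewrite SM0 => /isometry_eq0.
have : (S @` M) 0 by rewrite SM0.
by case=> x Mx /isometry_eq0 <-.
Qed.

Lemma restr_inf_isometry_comp T M : restr_inf ip (S \o T) M = restr_inf ip T M.
Proof. by rewrite /restr_inf; congr inf; apply: eq_imagel => x _; apply: S_isometry. Qed.

Lemma restr_inf_comp_isometry T M : restr_inf ip (T \o S) M = restr_inf ip T (S @` M).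
Proof.
have sphere_image : [set y | (S @` M) y /\ hnorm ip y = 1] =
                    S @` [set x | M x /\ hnorm ip x = 1].
  apply/seteqP; split => [_ [[x Mx <-] Sx1] | _ [x [Mx x1] <-]].
    by exists x => //; split; rewrite // -S_isometry.
  by split; [exists x | rewrite S_isometry].
by rewrite /restr_inf sphere_image image_comp.
Qed.

Lemma prop_Nstar_isometry_comp T M : prop_Nstar ip T M -> prop_Nstar ip (S \o T) M.
Proof.
case=> x0 [Mx0 x01 Tx0_min]; exists x0; split => //.
by rewrite restr_inf_isometry_comp /= S_isometry.
Qed.

Lemma prop_Nstar_comp_isometry T M : prop_Nstar ip T (S @` M) -> prop_Nstar ip (T \o S) M.
Proof.
case=> _ [[x0 Mx0 <-] Sx01 Tx0_min]; exists x0; split => //.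
  by rewrite -S_isometry.
by rewrite restr_inf_comp_isometry.
Qed.

Lemma prop_ANstar_isometry_comp T : prop_ANstar ip T -> prop_ANstar ip (S \o T).
Proof. by move=> T_AN M M_closed M_neq0; apply/prop_Nstar_isometry_comp/T_AN. Qed.

Lemma prop_ANstar_comp_isometry T : prop_ANstar ip T -> prop_ANstar ip (T \o S).
Proof.
move=> T_AN M M_closed M_neq0; apply/prop_Nstar_comp_isometry/T_AN.
  exact: closed_subspace_isometry.
exact: isometry_image_neq0.
Qed.

End LinearIsometry.

Theorem proposition3p3 (R : realType) (V : lmodType R[i]) (ip : V -> V -> R[i])
    (Hhil : is_hilbert ip) (Rop T : V -> V)
    (HR : bounded_op ip Rop) (HRiso : is_isometry ip Rop)
    (HT : bounded_op ip T) (HTan : prop_ANstar ip T) :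
  prop_ANstar ip (T \o Rop) /\ prop_ANstar ip (Rop \o T).
Proof.
split; first exact: (prop_ANstar_comp_isometry Hhil HR.1 HRiso).
exact: prop_ANstar_isometry_comp.
Qed.
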